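(* For an integer $d\geq2$ and $\mu,\nu\in[0,1]$ define $$f_d(\mu,\nu)=(d-2)(\mu+\nu-\mu\nu)+\mu^2+\nu^2,\qquad g_d(\mu,\nu)=2(d-2)(\mu+\nu-\mu\nu)-d(\mu^2+\nu^2)+3.$$ Then for every $d\geq2$ and all $\mu,\nu\in[0,1]$, the inequality $f_d(\mu,\nu)>d-1$ implies both $g_d(\mu,\nu)<d-1$ and $\mu+\nu>1$. For $d=2$ the converse also holds: if $g_2(\mu,\nu)<1$ and $\mu+\nu>1$ then $f_2(\mu,\nu)>1$. For every $d\geq3$ the converse fails: there exist $\mu,\nu\in[0,1]$ with $\mu+\nu>1$ and $g_d(\mu,\nu)<d-1$ but $f_d(\mu,\nu)\leq d-1$.
   Context: Interpretation (not needed for the claim): for noisy versions $\mu|\varphi_x\rangle\langle\varphi_x|+(1-\mu)I/d$ and $\nu|\psi_y\rangle\langle\psi_y|+(1-\nu)I/d$ of two measurements in mutually unbiased bases of $\mathbb{C}^d$, $f_d>d-1$ characterizes usefulness for $(2,d)$-QRAC and, given $\mu+\nu>1$, $g_d<d-1$ characterizes incompatibility. *)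

From Stdlib Require Import Reals Lra.
Open Scope R_scope.

Definition f_d (d : nat) (mu nu : R) : R :=
  (INR d - 2) * (mu + nu - mu * nu) + mu ^ 2 + nu ^ 2.

Definition g_d (d : nat) (mu nu : R) : R :=
  2 * (INR d - 2) * (mu + nu - mu * nu) - INR d * (mu ^ 2 + nu ^ 2) + 3.

(* With [D = INR d], [t = 1 - (1 - mu)(1 - nu)] and [s = mu^2 + nu^2], both
   [f_d] and [g_d] are affine in [(t, s)], and [g_d - (D - 1)] equals
   [-D (f_d - (D - 1)) - (D^2 - 4)(1 - t)]; since [t <= 1] on the unit square,
   [f_d > D - 1] forces [g_d < D - 1].  If [mu + nu <= 1] then [s <= 1], so
   [f_d <= (D - 2) + 1].  For [d = 2], [g_2 = 3 - 2 f_2].  For [d >= 3] the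
   point [mu = nu = 7/10] separates the two conditions. *)
From Stdlib Require Import Reals Lra Psatz.
Open Scope R_scope.

Lemma INR_ge2 (d : nat) : (2 <= d)%nat -> 2 <= INR d.
Proof. intros Hd; apply (le_INR 2) in Hd; simpl in Hd; lra. Qed.

Lemma f_d_sub_eq (d : nat) (mu nu : R) :
  f_d d mu nu - (INR d - 1)
  = - (INR d - 2) * ((1 - mu) * (1 - nu)) - (1 - (mu ^ 2 + nu ^ 2)).
Proof. unfold f_d; ring. Qed.

Lemma g_d_sub_eq (d : nat) (mu nu : R) :
  g_d d mu nu - (INR d - 1)
  = - INR d * (f_d d mu nu - (INR d - 1))
    - (INR d ^ 2 - 4) * ((1 - mu) * (1 - nu)).
Proof. unfold f_d, g_d; ring. Qed.

Lemma g_2_eq (mu nu : R) : g_d 2 mu nu = 3 - 2 * f_d 2 mu nu.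
Proof. unfold f_d, g_d; simpl; ring. Qed.

Lemma unit_square_compl_prod_ge0 (mu nu : R) :
  mu <= 1 -> nu <= 1 -> 0 <= (1 - mu) * (1 - nu).
Proof. intros Hmu Hnu; apply Rmult_le_pos; lra. Qed.

Lemma g_d_lt_of_f_d_gt (d : nat) (mu nu : R) :
  (2 <= d)%nat -> mu <= 1 -> nu <= 1 ->
  f_d d mu nu > INR d - 1 -> g_d d mu nu < INR d - 1.
Proof.
  intros Hd Hmu Hnu Hf.
  pose proof (INR_ge2 d Hd) as HD.
  pose proof (unit_square_compl_prod_ge0 mu nu Hmu Hnu) as Hp.
  pose proof (g_d_sub_eq d mu nu) as Hg.
  assert (Hlin : 0 < INR d * (f_d d mu nu - (INR d - 1))) by (apply Rmult_lt_0_compat; lra).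
  assert (Hquad : 0 <= (INR d ^ 2 - 4) * ((1 - mu) * (1 - nu))) by (apply Rmult_le_pos; nra).
  lra.
Qed.

Lemma f_d_le_of_sum_le1 (d : nat) (mu nu : R) :
  (2 <= d)%nat -> 0 <= mu <= 1 -> 0 <= nu <= 1 ->
  mu + nu <= 1 -> f_d d mu nu <= INR d - 1.
Proof.
  intros Hd Hmu Hnu Hs.
  pose proof (INR_ge2 d Hd) as HD.
  pose proof (f_d_sub_eq d mu nu) as Hf.
  assert (Hsq : mu ^ 2 + nu ^ 2 <= 1) by nra.
  assert (Hlin : 0 <= (INR d - 2) * ((1 - mu) * (1 - nu))).
  { apply Rmult_le_pos; [lra | apply unit_square_compl_prod_ge0; lra]. }
  lra.
Qed.

(* [f_d <= D - 1] iff [D >= 16/9], and [g_d < D - 1] iff [D > 9/4]. *)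
Lemma f_d_g_d_at_7_10 (d : nat) :
  (3 <= d)%nat ->
  g_d d (7/10) (7/10) < INR d - 1 /\ f_d d (7/10) (7/10) <= INR d - 1.
Proof.
  intros Hd; apply (le_INR 3) in Hd; simpl in Hd.
  unfold f_d, g_d; split; lra.
Qed.

Theorem proposition4 :
  (forall (d : nat) (mu nu : R), (2 <= d)%nat ->
     0 <= mu <= 1 -> 0 <= nu <= 1 ->
     f_d d mu nu > INR d - 1 ->
     g_d d mu nu < INR d - 1 /\ mu + nu > 1)
  /\
  (forall mu nu : R, 0 <= mu <= 1 -> 0 <= nu <= 1 ->
     g_d 2 mu nu < 1 -> mu + nu > 1 -> f_d 2 mu nu > 1)
  /\
  (forall d : nat, (3 <= d)%nat ->
     exists mu nu : R, 0 <= mu <= 1 /\ 0 <= nu <= 1 /\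
       mu + nu > 1 /\ g_d d mu nu < INR d - 1 /\ f_d d mu nu <= INR d - 1).
Proof.
  split; [|split].
  - intros d mu nu Hd Hmu Hnu Hf; split.
    + apply g_d_lt_of_f_d_gt; tauto.
    + destruct (Rle_lt_dec (mu + nu) 1) as [Hs | Hs]; [|lra].
      pose proof (f_d_le_of_sum_le1 d mu nu Hd Hmu Hnu Hs); lra.
  - intros mu nu _ _ Hg _; rewrite g_2_eq in Hg; lra.
  - intros d Hd; exists (7/10), (7/10).
    pose proof (f_d_g_d_at_7_10 d Hd); repeat split; lra.
Qed.
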